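(* Let $g\in\mathcal G^{\mathrm{dyad}}$. (1) For $d\ge\deg(g)$ and a permutation $\pi$ of $\{1,\dots,2^d\}$ with $g=g_\pi$, the map $T_g:\mathcal H^{X,d}\to\mathcal H^{X,d}$, $T_gf(X_{I^d_1},\dots,X_{I^d_{2^d}}):=f(X_{I^d_{\pi(1)}},\dots,X_{I^d_{\pi(2^d)}})$, is well defined: if $f_1(X_{I^d_1},\dots,X_{I^d_{2^d}})=f_2(X_{I^d_1},\dots,X_{I^d_{2^d}})$ a.s., then $f_1(X_{I^d_{\pi(1)}},\dots)=f_2(X_{I^d_{\pi(1)}},\dots)$ a.s. (2) For $e\ge d\ge\deg(g)$ and $g=g_{\pi_e}=g_{\pi_d}$ with $\pi_e,\pi_d$ permutations of $\{1,\dots,2^e\}$, $\{1,\dots,2^d\}$ respectively, the restriction of $T_{g_{\pi_e}}$ (defined on $\mathcal H^{X,e}$) to $\mathcal H^{X,d}$ equals $T_{g_{\pi_d}}$. (3) For $F\in\mathcal H^{X,d}$ with $d\ge\deg(g)$, $F$ and $T_gF$ have the same distribution; in particular $T_g$ is a linear isometry with respect to the $L_2(\mathcal F^X)$-norm.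
   Context: $X=(X_t)_{t\in[0,1]}$ is a Lévy process with càdlàg paths and $X_0\equiv0$ on a complete probability space; $\mathcal F^X$ is $\sigma(X_t:t\in[0,1])$ augmented by null sets; $X_{(a,b]}:=X_b-X_a$. Dyadic intervals $I^d_k=((k-1)2^{-d},k2^{-d}]$. $\mathcal H^{X,d}=\{f(X_{I^d_1},\dots,X_{I^d_{2^d}}):f\text{ bounded continuous on }\mathbb R^{2^d}\}\subseteq L_2(\mathcal F^X)$ (as a.s.-equivalence classes). For a permutation $\pi$ of $\{1,\dots,2^d\}$, $g_\pi:(0,1]\to(0,1]$ is $g_\pi(t)=\pi(k)2^{-d}-(k2^{-d}-t)$ for $t\in I^d_k$; $\mathcal G^{\mathrm{dyad}}$ is the set of all $g_\pi$, $d\ge0$; $\deg(g)$ is the least $d$ such that $g=g_\pi$ for some permutation $\pi$ of $\{1,\dots,2^d\}$. *)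

From HB Require Import structures.
From mathcomp Require Import all_boot all_order all_algebra all_fingroup.
From mathcomp Require Import all_classical all_reals all_analysis.
Set Implicit Arguments. Unset Strict Implicit. Unset Printing Implicit Defensive.
Import Order.TTheory GRing.Theory Num.Theory.
Import numFieldNormedType.Exports.
Local Open Scope classical_set_scope.
Local Open Scope ring_scope.

Section Defs.
Context {R : realType} {d0 : measure_display} {Omega : measurableType d0}.

Definition dyad_pt (d k : nat) : R := k%:R / (2 ^ d)%:R.

(* (X_{I^d_1},...,X_{I^d_{2^d}}) ; with 0-based index k : 'I_(2^d), the
   k-th coordinate is X_{(k 2^-d, (k+1) 2^-d]} = X_{(k+1)2^-d} - X_{k 2^-d} *)
Definition dyad_incr (X : R -> Omega -> R) (d : nat) (w : Omega)
  : 'rV[R]_(2 ^ d) :=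
  \row_(k < 2 ^ d) (X (dyad_pt d k.+1) w - X (dyad_pt d k) w).

Definition dyad_incr_perm (X : R -> Omega -> R) (d : nat)
  (pi : {perm 'I_(2 ^ d)}) (w : Omega) : 'rV[R]_(2 ^ d) :=
  \row_(k < 2 ^ d) (dyad_incr X d w) 0 (pi k).

(* g_pi : (0,1] -> (0,1]; for t in I^d_k (0-based: (k 2^-d,(k+1) 2^-d]),
   g_pi(t) = (pi(k)+1) 2^-d - ((k+1) 2^-d - t).  (Value 0 outside (0,1].) *)
Definition gperm (d : nat) (pi : {perm 'I_(2 ^ d)}) (t : R) : R :=
  \sum_(k < 2 ^ d)
    (if (dyad_pt d k < t) && (t <= dyad_pt d k.+1)
     then dyad_pt d (pi k).+1 - (dyad_pt d k.+1 - t) else 0).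

Definition bounded_continuous (n : nat) (f : 'rV[R]_n -> R) : Prop :=
  continuous f /\ exists M : R, forall x, `|f x| <= M.

Definition levy_process (P : probability Omega R) (X : R -> Omega -> R) : Prop :=
  [/\ (forall t, measurable_fun setT (X t)),
      (forall w, X 0 w = 0),
      (forall w, (forall t, 0 <= t < 1 -> X ^~ w @ at_right t --> X t w) /\
                 (forall t, 0 < t <= 1 -> cvg (X ^~ w @ at_left t))),
      (forall (n : nat) (ts : nat -> R) (B : nat -> set R),
          0 <= ts 0%N -> ts n <= 1 ->
          (forall i, (i < n)%N -> ts i <= ts i.+1) ->
          (forall i, measurable (B i)) ->
          (P (\bigcap_(i in `I_n) [set w | (X (ts i.+1) w - X (ts i) w)%R \in B i])
          = \prod_(i < n) P [set w | (X (ts i.+1) w - X (ts i) w)%R \in B i])%E) &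
      (forall s t (B : set R), 0 <= s -> s <= t -> t <= 1 -> measurable B ->
          P [set w | X t w - X s w \in B] = P [set w | X (t - s) w \in B])].

End Defs.

From HB Require Import structures.
From mathcomp Require Import all_boot all_order all_algebra all_fingroup.
From mathcomp Require Import all_classical all_reals all_analysis.
From mathcomp Require Import measurable_realfun.
From mathcomp Require Import zify.
Set Implicit Arguments.
Unset Strict Implicit.
Unset Printing Implicit Defensive.
Import Order.TTheory GRing.Theory Num.Theory.
Import numFieldNormedType.Exports.
Local Open Scope classical_set_scope.
Local Open Scope ring_scope.

(* The dyadic increments of a Lévy process are i.i.d., so the increment
   vector and any permutation of it have the same law on R^(2^d): both give
   a measurable rectangle the same product probability, and rectangles form
   a pi-system whose generated sigma-algebra contains the open sets, hence
   the preimages of Borel sets under continuous maps.  This gives (1) and (3).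
   For (2), a coarse increment is the sum of the fine increments inside it,
   and g_{pi_e} = g_{pi_d} forces pi_e to move each block of 2^(e-d)
   consecutive fine intervals rigidly onto the block prescribed by pi_d; so
   the permuted coarse increments are the block sums of the permuted fine
   ones, and (1) applies to the continuous function f o (block sums). *)

Section rectangles.
Context {R : realType}.
Variable n : nat.

Definition rectangles : set (set 'rV[R]_n) :=
  [set S | exists2 B : 'I_n -> set R, (forall i, measurable (B i)) &
     S = [set x : 'rV[R]_n | forall i, B i (x ord0 i)]].

Lemma rectangles_setI_closed : setI_closed rectangles.
Proof.
move=> _ _ [B mB ->] [C mC ->]; exists (fun i => B i `&` C i).
  by move=> i; exact: measurableI.
apply/seteqP; split=> x /=; first by move=> [Bx Cx] i; split.
by move=> BCx; split=> i; case: (BCx i).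
Qed.

Definition rat_box (q : {ffun 'I_n -> rat * rat}) : set 'rV[R]_n :=
  [set x | forall i, `](ratr (q i).1 : R), ratr (q i).2[%classic (x ord0 i)].

Lemma rat_box_rectangle q : rectangles (rat_box q).
Proof. by exists (fun i => `](ratr (q i).1 : R), ratr (q i).2[%classic). Qed.

Lemma nbhs_rat_box (x : 'rV[R]_n) (U : set 'rV[R]_n) :
  nbhs x U -> exists q, rat_box q x /\ rat_box q `<=` U.
Proof.
move=> /nbhs_ballP[e e0 xeU].
have qP i : exists ab : rat * rat,
    (x ord0 i - e < ratr ab.1 < x ord0 i) && (x ord0 i < ratr ab.2 < x ord0 i + e).
  have [a] : exists a : rat, (ratr a : R) \in `]x ord0 i - e, x ord0 i[.
    by apply: rat_in_itvoo; rewrite ltrBlDr ltrDl.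
  have [b] : exists b : rat, (ratr b : R) \in `]x ord0 i, x ord0 i + e[.
    by apply: rat_in_itvoo; rewrite ltrDl.
  by rewrite !in_itv /= => xb ax; exists (a, b); rewrite ax xb.
have [qf qfP] := choice qP; exists [ffun i => qf i]; split.
  move=> i; rewrite ffunE /= in_itv /=.
  by have /andP[/andP[_ ->] /andP[-> _]] := qfP i.
move=> y yq; apply: xeU; split=> // i j; rewrite (ord1 i) /ball /= ltr_distlC.
have := yq j; rewrite /= ffunE in_itv /= => /andP[ay yb].
have /andP[/andP[xa _] /andP[_ bx]] := qfP j.
by rewrite (lt_trans xa ay) (lt_trans yb bx).
Qed.

(* An open set is the countable union of the rational boxes it contains. *)
Lemma open_sigma_rectangles (U : set 'rV[R]_n) :
  open U -> <<s rectangles >> U.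
Proof.
move=> oU.
pose F k : set 'rV[R]_n := match @unpickle {ffun 'I_n -> rat * rat} k with
  | Some q => if pselect (rat_box q `<=` U) is left _ then rat_box q else set0
  | None => set0 end.
have -> : U = \bigcup_k F k.
  apply/seteqP; split=> [x Ux|x [k _]]; last first.
    by rewrite /F; case: unpickle => [q|//]; case: pselect => // qU /qU.
  have [q [qx qU]] := nbhs_rat_box (open_nbhs_nbhs (conj oU Ux)).
  by exists (pickle q) => //; rewrite /F pickleK; case: pselect.
apply: sigma_algebra_bigcup => k; rewrite /F; case: unpickle => [q|]; last first.
  exact: sigma_algebra0.
case: pselect => _; last exact: sigma_algebra0.
by apply: sub_sigma_algebra; exact: rat_box_rectangle.
Qed.

Lemma continuous_preimage_sigma_rectangles (f : 'rV[R]_n -> R) (B : set R) :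
  continuous f -> measurable B -> <<s rectangles >> (f @^-1` B).
Proof.
move=> cf mB; have {}mB : (@RGenInftyO.G R).-sigma.-measurable B.
  by rewrite -RGenInftyO.measurableE.
suff : <<s @RGenInftyO.G R >> `<=` [set B | <<s rectangles >> (f @^-1` B)] by apply.
apply: smallest_sub.
  split=> [|A fA|F fF] /=; first by rewrite preimage_set0; exact: sigma_algebra0.
    by rewrite setTD -preimage_setC; exact: sigma_algebraC.
  by rewrite preimage_bigcup; exact: sigma_algebra_bigcup.
move=> _ [x ->]; apply: open_sigma_rectangles.
by apply: open_comp; [move=> y _; exact: cf|exact: interval_open].
Qed.

End rectangles.
Arguments rectangles {R} n.

Section law_of_random_vectors.
Context {R : realType} {d0 : measure_display} {Omega : measurableType d0}.
Variables (P : probability Omega R) (n : nat).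

Lemma measurable_preimage_sigma_rectangles (Y : Omega -> 'rV[R]_n) :
  (forall i, measurable_fun setT (fun w => Y w ord0 i)) ->
  forall S, <<s rectangles n >> S -> measurable (Y @^-1` S).
Proof.
move=> mY; apply: smallest_sub.
  split=> [|S mS|F mF] /=; first by rewrite preimage_set0.
    by rewrite setTD -preimage_setC; exact: measurableC.
  by rewrite preimage_bigcup; exact: bigcupT_measurable.
move=> _ [B mB ->].
have -> : Y @^-1` [set x | forall i, B i (x ord0 i)] =
    \bigcap_(i in [set: 'I_n]) ((fun w => Y w ord0 i) @^-1` B i).
  by apply/seteqP; split=> w /= Yw i; [move=> _|]; exact: Yw.
apply: fin_bigcap_measurable; first exact: finite_finset.
by move=> i _; rewrite -[X in measurable X]setTI; exact: mY.
Qed.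

Lemma measurable_fun_continuous_comp (Y : Omega -> 'rV[R]_n) (f : 'rV[R]_n -> R) :
  (forall i, measurable_fun setT (fun w => Y w ord0 i)) -> continuous f ->
  measurable_fun setT (fun w => f (Y w)).
Proof.
move=> mY cf _ B mB; rewrite setTI.
have fB := continuous_preimage_sigma_rectangles cf mB.
exact: measurable_preimage_sigma_rectangles fB.
Qed.

Lemma eq_law_ge0_integral (Z Z' : Omega -> R) (phi : R -> \bar R) :
  measurable_fun setT Z -> measurable_fun setT Z' ->
  (forall B, measurable B -> P (Z @^-1` B) = P (Z' @^-1` B)) ->
  measurable_fun setT phi -> (forall y, (0 <= phi y)%E) ->
  (\int[P]_w phi (Z w) = \int[P]_w phi (Z' w))%E.
Proof.
move=> mZ mZ' eqZ mphi phi0.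
have := ge0_integral_pushforward mZ P measurableT mphi (fun y _ => phi0 y).
have := ge0_integral_pushforward mZ' P measurableT mphi (fun y _ => phi0 y).
rewrite !preimage_setT => <- <-.
by apply: eq_measure_integral => B mB _; exact: eqZ.
Qed.

Variables Y Y' : Omega -> 'rV[R]_n.
Hypothesis mY : forall i, measurable_fun setT (fun w => Y w ord0 i).
Hypothesis mY' : forall i, measurable_fun setT (fun w => Y' w ord0 i).
Hypothesis eq_law_rectangles :
  forall S, rectangles n S -> P (Y @^-1` S) = P (Y' @^-1` S).

Lemma eq_law_sigma_rectangles S :
  <<s rectangles n >> S -> P (Y @^-1` S) = P (Y' @^-1` S).
Proof.
have mYS := measurable_preimage_sigma_rectangles mY.
have mY'S := measurable_preimage_sigma_rectangles mY'.
pose D := [set A | <<s rectangles n >> A /\ P (Y @^-1` A) = P (Y' @^-1` A)].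
suff : <<d rectangles n >> `<=` D.
  rewrite setI_closed_g_dynkin_g_sigma_algebra; last exact: rectangles_setI_closed.
  by move=> sub /sub[].
apply: smallest_sub; last first.
  by move=> A RA; split; [exact: sub_sigma_algebra|exact: eq_law_rectangles].
split=> [|A [sA eA]|F tF DF].
- split; last by rewrite !preimage_setT.
  by rewrite -[X in <<s _ >> X]setC0; apply: sigma_algebraC; exact: sigma_algebra0.
- split; first exact: sigma_algebraC.
  by rewrite -!preimage_setC !probability_setC ?eA; [|exact: mY'S|exact: mYS].
- have sF k : <<s rectangles n >> (F k) by case: (DF k).
  split; first exact: sigma_algebra_bigcup.
  have tpre (Z : Omega -> 'rV[R]_n) : trivIset setT (fun k => Z @^-1` F k).
    apply/trivIsetP => i j _ _ ij; rewrite -preimage_setI.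
    by move/trivIsetP : tF => /(_ _ _ I I ij) ->; rewrite preimage_set0.
  rewrite !preimage_bigcup !measure_bigcup //; first last.
  - by move=> k _; exact: mYS.
  - by move=> k _; exact: mY'S.
  by apply: eq_eseriesr => k _; case: (DF k).
Qed.

Lemma eq_law_continuous_comp (f : 'rV[R]_n -> R) (B : set R) :
  continuous f -> measurable B ->
  P ((fun w => f (Y w)) @^-1` B) = P ((fun w => f (Y' w)) @^-1` B).
Proof.
move=> cf mB.
exact: eq_law_sigma_rectangles (continuous_preimage_sigma_rectangles cf mB).
Qed.

Lemma ae_eq_continuous_comp (f1 f2 : 'rV[R]_n -> R) :
  continuous f1 -> continuous f2 ->
  {ae P, forall w, f1 (Y w) = f2 (Y w)} -> {ae P, forall w, f1 (Y' w) = f2 (Y' w)}.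
Proof.
move=> c1 c2 [N [mN PN sN]].
pose f x := f1 x - f2 x.
have cf : continuous f by move=> x; exact: (continuousB (c1 x) (c2 x)).
have mneq0 : measurable (~` [set 0 : R]) by exact: measurableC.
exists ((fun w => f (Y' w)) @^-1` ~` [set 0]); split.
- by rewrite -[X in measurable X]setTI; exact: measurable_fun_continuous_comp.
- rewrite -eq_law_continuous_comp //; apply/eqP; rewrite -measure_le0 -PN.
  apply: le_measure; rewrite ?inE //.
    by rewrite -[X in measurable X]setTI; exact: measurable_fun_continuous_comp.
  by move=> w /= fYw; apply: sN => /= e12; apply: fYw; rewrite /f e12 subrr.
- by move=> w /= ne12 /eqP; rewrite subr_eq0 => /eqP.
Qed.

Lemma eq_integral_sqr_continuous_comp (f : 'rV[R]_n -> R) : continuous f ->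
  (\int[P]_w (f (Y w) ^+ 2)%:E = \int[P]_w (f (Y' w) ^+ 2)%:E)%E.
Proof.
move=> cf; apply: (eq_law_ge0_integral (Z := fun w => f (Y w))
  (Z' := fun w => f (Y' w)) (phi := fun y => (y ^+ 2)%:E)).
- exact: measurable_fun_continuous_comp.
- exact: measurable_fun_continuous_comp.
- by move=> B mB; exact: eq_law_continuous_comp.
- by apply/measurable_EFinP; exact: exprn_measurable.
- by move=> y; rewrite lee_fin sqr_ge0.
Qed.

End law_of_random_vectors.

Section dyadic_points.
Context {R : realType}.
Implicit Types (d e : nat) (a b : nat).

Let exp2_gt0 d : 0 < (2 ^ d)%:R :> R.
Proof. by rewrite ltr0n expn_gt0. Qed.

Lemma dyad_pt0 d : dyad_pt d 0 = 0 :> R.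
Proof. by rewrite /dyad_pt mul0r. Qed.

Lemma dyad_pt_ge0 d a : 0 <= dyad_pt d a :> R.
Proof. by rewrite /dyad_pt divr_ge0. Qed.

Lemma dyad_pt_le d a b : (dyad_pt d a <= dyad_pt d b :> R) = (a <= b)%N.
Proof. by rewrite /dyad_pt ler_pM2r ?ler_nat // invr_gt0 exp2_gt0. Qed.

Lemma dyad_pt_lt d a b : (dyad_pt d a < dyad_pt d b :> R) = (a < b)%N.
Proof. by rewrite /dyad_pt ltr_pM2r ?ltr_nat // invr_gt0 exp2_gt0. Qed.

Lemma dyad_pt_inj d : injective (dyad_pt d : nat -> R).
Proof. by move=> a b ab; apply/eqP; rewrite eqn_leq -!(dyad_pt_le d) ab lexx. Qed.

Lemma dyad_ptD d a b : dyad_pt d a + dyad_pt d b = dyad_pt d (a + b) :> R.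
Proof. by rewrite /dyad_pt -mulrDl natrD. Qed.

Lemma dyad_pt_exp d : dyad_pt d (2 ^ d) = 1 :> R.
Proof. by rewrite /dyad_pt divff // lt0r_neq0 ?exp2_gt0. Qed.

Lemma dyad_ptSB d a : dyad_pt d a.+1 - dyad_pt d a = dyad_pt d 1 :> R.
Proof. by rewrite -addn1 -dyad_ptD addrAC subrr add0r. Qed.

Lemma dyad_pt_refine d e a : (d <= e)%N ->
  dyad_pt e (a * 2 ^ (e - d)) = dyad_pt d a :> R.
Proof.
move=> de; rewrite /dyad_pt.
have -> : (2 ^ e = 2 ^ d * 2 ^ (e - d))%N by rewrite -expnD subnKC.
by rewrite !natrM invfM mulrACA divff ?mulr1 // lt0r_neq0 ?exp2_gt0.
Qed.

Lemma gperm_dyad d (pi : {perm 'I_(2 ^ d)}) (k : 'I_(2 ^ d)) (t : R) :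
  dyad_pt d k < t <= dyad_pt d k.+1 ->
  gperm pi t = dyad_pt d (pi k).+1 - (dyad_pt d k.+1 - t).
Proof.
move=> /andP[kt tk]; rewrite /gperm (bigD1 k) //= kt tk big1 ?addr0 // => j jk.
case: ifP => // /andP[jt tj].
have : (j < k.+1)%N by rewrite -(dyad_pt_lt d) (lt_le_trans jt tk).
have : (k < j.+1)%N by rewrite -(dyad_pt_lt d) (lt_le_trans kt tj).
by move: jk; rewrite -val_eqE /= => /eqP; lia.
Qed.

End dyadic_points.

Section dyadic_increments.
Context {R : realType} {d0 : measure_display} {Omega : measurableType d0}.
Variables (P : probability Omega R) (X : R -> Omega -> R).
Hypothesis levyX : levy_process P X.

Lemma measurable_dyad_incr d i :
  measurable_fun setT (fun w => dyad_incr X d w ord0 i).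
Proof.
have [mX _ _ _ _] := levyX.
by under eq_fun do rewrite mxE; exact: measurable_funB.
Qed.

Lemma measurable_dyad_incr_perm d (pi : {perm 'I_(2 ^ d)}) i :
  measurable_fun setT (fun w => dyad_incr_perm X pi w ord0 i).
Proof. by under eq_fun do rewrite mxE; exact: measurable_dyad_incr. Qed.

Lemma dyad_incr_rectangle d (B : 'I_(2 ^ d) -> set R) :
  (forall i, measurable (B i)) ->
  P (dyad_incr X d @^-1` [set x | forall i, B i (x ord0 i)]) =
  (\prod_(i < 2 ^ d) P [set w | X (dyad_pt d 1) w \in B i])%E.
Proof.
move=> mB; have [_ _ _ indepX statX] := levyX.
pose Bn i : set R := if (insub i : option 'I_(2 ^ d)) is Some j then B j else setT.
have BnE (j : 'I_(2 ^ d)) : Bn j = B j by rewrite /Bn valK.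
have mBn i : measurable (Bn i) by rewrite /Bn; case: insub.
have pt_le_ptS i : dyad_pt d i <= dyad_pt d i.+1 :> R by rewrite dyad_pt_le.
have pt_le1 i : (i <= 2 ^ d)%N -> dyad_pt d i <= 1 :> R.
  by move=> id; rewrite -(dyad_pt_exp d) dyad_pt_le.
transitivity (P (\bigcap_(i in `I_(2 ^ d))
    [set w | X (dyad_pt d i.+1) w - X (dyad_pt d i) w \in Bn i])).
  congr (P _); apply/seteqP; split=> w /= Bw.
  - by move=> i /= id; have := Bw (Ordinal id); rewrite mxE -BnE; exact: mem_set.
  - by move=> j; rewrite mxE -BnE; apply: set_mem; exact: Bw j (ltn_ord j).
rewrite indepX ?dyad_pt_ge0 ?pt_le1 //; apply: eq_bigr => i _.
rewrite BnE -(dyad_ptSB d i) statX ?dyad_pt_ge0 ?pt_le1 //.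
Qed.

Lemma dyad_incr_perm_rectangle d (pi : {perm 'I_(2 ^ d)}) S :
  rectangles (2 ^ d) S ->
  P (dyad_incr X d @^-1` S) = P (dyad_incr_perm X pi @^-1` S).
Proof.
move=> [B mB ->].
have -> : dyad_incr_perm X pi @^-1` [set x | forall i, B i (x ord0 i)] =
    dyad_incr X d @^-1` [set x | forall j, B (pi^-1 j)%g (x ord0 j)].
  apply/seteqP; split=> w /= Bw j.
  - by have := Bw (pi^-1 j)%g; rewrite mxE permKV.
  - by rewrite mxE; have := Bw (pi j); rewrite permK.
rewrite dyad_incr_rectangle // (dyad_incr_rectangle (B := fun j => B (pi^-1 j)%g)).
  by rewrite (reindex_inj (@perm_inj _ (pi^-1)%g)).
by move=> j; exact: mB.
Qed.

Lemma ae_eq_dyad_incr_perm d (pi : {perm 'I_(2 ^ d)}) (f1 f2 : 'rV[R]_(2 ^ d) -> R) :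
  continuous f1 -> continuous f2 ->
  {ae P, forall w, f1 (dyad_incr X d w) = f2 (dyad_incr X d w)} ->
  {ae P, forall w, f1 (dyad_incr_perm X pi w) = f2 (dyad_incr_perm X pi w)}.
Proof.
apply: ae_eq_continuous_comp; first exact: measurable_dyad_incr.
  exact: measurable_dyad_incr_perm.
exact: dyad_incr_perm_rectangle.
Qed.

Lemma eq_law_dyad_incr_perm d (pi : {perm 'I_(2 ^ d)}) (f : 'rV[R]_(2 ^ d) -> R) B :
  continuous f -> measurable B ->
  P ((fun w => f (dyad_incr X d w)) @^-1` B) =
  P ((fun w => f (dyad_incr_perm X pi w)) @^-1` B).
Proof.
apply: eq_law_continuous_comp; first exact: measurable_dyad_incr.
  exact: measurable_dyad_incr_perm.
exact: dyad_incr_perm_rectangle.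
Qed.

Lemma eq_integral_sqr_dyad_incr_perm d (pi : {perm 'I_(2 ^ d)})
    (f : 'rV[R]_(2 ^ d) -> R) :
  continuous f ->
  (\int[P]_w (f (dyad_incr X d w) ^+ 2)%:E =
   \int[P]_w (f (dyad_incr_perm X pi w) ^+ 2)%:E)%E.
Proof.
apply: eq_integral_sqr_continuous_comp; first exact: measurable_dyad_incr.
  exact: measurable_dyad_incr_perm.
exact: dyad_incr_perm_rectangle.
Qed.

End dyadic_increments.

Section block_sums.
Context {R : realType}.
Variables d e : nat.
Hypothesis de : (d <= e)%N.
Local Notation b := (2 ^ (e - d))%N.

Let b_gt0 : (0 < b)%N. Proof. by rewrite expn_gt0. Qed.

Let exp_e : (2 ^ e = 2 ^ d * b)%N. Proof. by rewrite -expnD subnKC. Qed.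

Definition block_sum (y : 'rV[R]_(2 ^ e)) : 'rV[R]_(2 ^ d) :=
  \row_(k < 2 ^ d) \sum_(j < 2 ^ e | (j %/ b == k)%N) y ord0 j.

Lemma block_sum_range (F : nat -> R) k : (k < 2 ^ d)%N ->
  \sum_(j < 2 ^ e | (j %/ b == k)%N) F j = \sum_(k * b <= j < k * b + b) F j.
Proof.
move=> kd; rewrite big_geq_mkord (big_ord_widen_cond (2 ^ e)); last first.
  by rewrite exp_e -mulSnr leq_mul2r kd orbT.
apply: eq_bigl => j /=.
by rewrite eqn_leq -ltnS ltn_divLR // leq_divRL // mulSnr andbC.
Qed.

Lemma continuous_block_sum : continuous block_sum.
Proof.
move=> x A /= /nbhs_ballP[eps eps0 xA].
pose dl := eps / (2 ^ e).+1%:R.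
have dl0 : 0 < dl by rewrite divr_gt0.
apply/nbhs_ballP; exists dl => // y [_ xy]; apply: xA; split=> // i k.
rewrite (ord1 i) /ball /= !mxE -sumrB.
apply: (le_lt_trans (ler_norm_sum _ _ _)).
apply: (@le_lt_trans _ _ (\sum_(j < 2 ^ e) dl)).
  rewrite big_mkcond /=; apply: ler_sum => j _.
  by case: ifP => _; [exact: ltW (xy ord0 j)|exact: ltW].
rewrite big_const_ord iter_addr addr0 /dl -mulrnAr gtr_pMr // -mulr_natr mulrC.
by rewrite ltr_pdivrMr ?ltr0n // mul1r ltr_nat.
Qed.

Lemma dyad_incr_block_sum {d0 : measure_display} {Omega : measurableType d0}
    (X : R -> Omega -> R) w :
  dyad_incr X d w = block_sum (dyad_incr X e w).
Proof.
apply/rowP => k; rewrite !mxE; under eq_bigr do rewrite mxE.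
rewrite (block_sum_range (fun j => X (dyad_pt e j.+1) w - X (dyad_pt e j) w)) //.
by rewrite telescope_sumr ?leq_addr // -mulSnr !dyad_pt_refine.
Qed.

(* Evaluate both sides of g_{pi_e} = g_{pi_d} at the right end of I^e_K. *)
Lemma gperm_eq_perm_blockwise (pid : {perm 'I_(2 ^ d)}) (pie : {perm 'I_(2 ^ e)})
    (K : 'I_(2 ^ e)) (Kd : (K %/ b < 2 ^ d)%N) :
  (forall t : R, 0 < t <= 1 -> gperm pie t = gperm pid t) ->
  pie K = (pid (Ordinal Kd) * b + K %% b)%N :> nat.
Proof.
set k := Ordinal Kd => eq_g.
have Kt : 0 < (dyad_pt e K.+1 : R) <= 1.
  by rewrite -(dyad_pt0 e) -(dyad_pt_exp e) dyad_pt_lt dyad_pt_le /=.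
have := eq_g _ Kt.
rewrite (gperm_dyad pie (k := K)) ?lexx ?dyad_pt_lt ?andbT // subrr subr0.
rewrite (gperm_dyad pid (k := k)); last first.
  rewrite -!(dyad_pt_refine _ de) dyad_pt_lt dyad_pt_le /= ltnS leq_divM /=.
  exact: ltn_ceil.
rewrite -!(dyad_pt_refine _ de) opprB => eq_pt.
have : dyad_pt e (pie K).+1 + dyad_pt e (k.+1 * b) =
    dyad_pt e ((pid k).+1 * b) + dyad_pt e K.+1 :> R.
  by rewrite eq_pt -addrA subrK.
rewrite !dyad_ptD => /dyad_pt_inj.
have := divn_eq K b; have := ltn_pmod K b_gt0; rewrite !mulSn /= -/k.
set a := (k * b)%N; set c := (pid k * b)%N; set r := (K %% b)%N.
lia.
Qed.

Lemma dyad_incr_perm_block_sum {d0 : measure_display} {Omega : measurableType d0}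
    (X : R -> Omega -> R) (pid : {perm 'I_(2 ^ d)}) (pie : {perm 'I_(2 ^ e)}) w :
  (forall t : R, 0 < t <= 1 -> gperm pie t = gperm pid t) ->
  dyad_incr_perm X pid w = block_sum (dyad_incr_perm X pie w).
Proof.
move=> eq_g; apply/rowP => k; rewrite /dyad_incr_perm mxE dyad_incr_block_sum !mxE.
under [RHS]eq_bigr do rewrite mxE.
rewrite (reindex_inj (@perm_inj _ pie)) /=; apply: eq_bigl => j.
have jd : (j %/ b < 2 ^ d)%N by rewrite ltn_divLR // -exp_e.
rewrite (gperm_eq_perm_blockwise jd eq_g) divnMDl //.
rewrite (divn_small (ltn_pmod j b_gt0)) addn0.
by rewrite (inj_eq val_inj) (inj_eq (@perm_inj _ pid)) -(inj_eq val_inj).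
Qed.

End block_sums.
Arguments block_sum {R} d e.

Theorem lemma2p4 (R : realType) (d0 : measure_display)
  (Omega : measurableType d0) (P : probability Omega R)
  (X : R -> Omega -> R) (HX : levy_process P X) :
  (* (1) well-definedness of T_g on H^{X,d} *)
  (forall (d : nat) (pi : {perm 'I_(2 ^ d)}) (f1 f2 : 'rV[R]_(2 ^ d) -> R),
      bounded_continuous f1 -> bounded_continuous f2 ->
      {ae P, forall w, f1 (dyad_incr X d w) = f2 (dyad_incr X d w)} ->
      {ae P, forall w, f1 (dyad_incr_perm X pi w) = f2 (dyad_incr_perm X pi w)})
  /\
  (* (2) consistency: H^{X,d} ⊆ H^{X,e} and T_{g_{pi_e}} restricted to
     H^{X,d} equals T_{g_{pi_d}} *)
  (forall (d e : nat) (pid : {perm 'I_(2 ^ d)}) (pie : {perm 'I_(2 ^ e)}),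
      (d <= e)%N ->
      (forall t : R, 0 < t <= 1 -> gperm pie t = gperm pid t) ->
      forall f : 'rV[R]_(2 ^ d) -> R, bounded_continuous f ->
      (exists h : 'rV[R]_(2 ^ e) -> R, bounded_continuous h /\
         {ae P, forall w, h (dyad_incr X e w) = f (dyad_incr X d w)}) /\
      (forall h : 'rV[R]_(2 ^ e) -> R, bounded_continuous h ->
         {ae P, forall w, h (dyad_incr X e w) = f (dyad_incr X d w)} ->
         {ae P, forall w, h (dyad_incr_perm X pie w) = f (dyad_incr_perm X pid w)}))
  /\
  (* (3) F and T_g F have the same law; in particular equal L_2 norms *)
  (forall (d : nat) (pi : {perm 'I_(2 ^ d)}) (f : 'rV[R]_(2 ^ d) -> R),
      bounded_continuous f ->
      (forall B : set R, measurable B ->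
         P ((fun w => f (dyad_incr X d w)) @^-1` B)
         = P ((fun w => f (dyad_incr_perm X pi w)) @^-1` B)) /\
      (\int[P]_w ((f (dyad_incr X d w)) ^+ 2)%:E
       = \int[P]_w ((f (dyad_incr_perm X pi w)) ^+ 2)%:E)%E).
Proof.
split; [|split].
- by move=> d pi f1 f2 [cf1 _] [cf2 _]; exact: ae_eq_dyad_incr_perm.
- move=> d e pid pie de eq_g f [cf [M fM]].
  have cfB : continuous (fun y => f (block_sum d e y)).
    by move=> y; apply: continuous_comp; [exact: continuous_block_sum|exact: cf].
  have coarse_fine : dyad_incr X d = block_sum d e \o dyad_incr X e.
    by apply: funext => w; exact: dyad_incr_block_sum.
  have coarse_fine_perm :
      dyad_incr_perm X pid = block_sum d e \o dyad_incr_perm X pie.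
    by apply: funext => w; exact: dyad_incr_perm_block_sum.
  split.
    exists (fun y => f (block_sum d e y)); split; first by split=> //; exists M.
    by apply: aeW => w; rewrite coarse_fine.
  move=> h [ch _]; rewrite coarse_fine coarse_fine_perm.
  exact: (ae_eq_dyad_incr_perm HX pie ch cfB).
- move=> d pi f [cf _]; split=> [B mB|].
    exact: eq_law_dyad_incr_perm.
  exact: eq_integral_sqr_dyad_incr_perm.
Qed.
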